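(* Let $(g,[\cdot,\cdot]_1,[\cdot,\cdot]_2,\alpha,\beta)$ be a compatible BiHom-Lie algebra and $(V,\bullet_1,\bullet_2,\alpha_V,\beta_V)$ a representation of it, where $\alpha,\beta,\alpha_V,\beta_V$ are bijective. Then $g\oplus V$ carries a compatible BiHom-Lie algebra structure $(g\oplus V,[\cdot,\cdot]^{\ltimes}_1,[\cdot,\cdot]^{\ltimes}_2,\alpha\oplus\alpha_V,\beta\oplus\beta_V)$, where $(\alpha\oplus\alpha_V)(p,a)=(\alpha(p),\alpha_V(a))$, $(\beta\oplus\beta_V)(p,a)=(\beta(p),\beta_V(a))$ and, for $i=1,2$, $$[(p,a),(q,b)]^{\ltimes}_i=\big([p,q]_i,\ p\bullet_i b-(\alpha^{-1}\beta(q))\bullet_i(\alpha_V\beta_V^{-1}(a))\big),\qquad (p,a),(q,b)\in g\oplus V.$$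
   Context: A BiHom-Lie algebra is a 4-tuple $(g,[\cdot,\cdot],\alpha,\beta)$ with $\alpha,\beta:g\to g$ linear and $[\cdot,\cdot]$ bilinear such that $\alpha\circ\beta=\beta\circ\alpha$, $[\beta(p),\alpha(q)]=-[\beta(q),\alpha(p)]$ and $[\beta^{2}(p),[\beta(q),\alpha(r)]]+[\beta^{2}(q),[\beta(r),\alpha(p)]]+[\beta^{2}(r),[\beta(p),\alpha(q)]]=0$. A compatible BiHom-Lie algebra $(g,[\cdot,\cdot]_1,[\cdot,\cdot]_2,\alpha,\beta)$: both $(g,[\cdot,\cdot]_i,\alpha,\beta)$ are BiHom-Lie algebras and $(g,\lambda[\cdot,\cdot]_1+\eta[\cdot,\cdot]_2,\alpha,\beta)$ is a BiHom-Lie algebra for all $\lambda,\eta\in\mathbb{K}$. A representation of a BiHom-Lie algebra $(g,[\cdot,\cdot],\alpha,\beta)$ is $(V,\bullet,\alpha_V,\beta_V)$ with $\alpha_V,\beta_V:V\to V$ commuting linear maps and $\bullet:g\otimes V\to V$ bilinear satisfying, for all $p,q\in g$, $v\in V$: $\alpha(p)\bullet\alpha_V(v)=\alpha_V(p\bullet v)$; $\beta(p)\bullet\beta_V(v)=\beta_V(p\bullet v)$; $[\beta(p),q]\bullet\beta_V(v)=\alpha\beta(p)\bullet(q\bullet v)-\beta(q)\bullet(\alpha(p)\bullet v)$. A representation of the compatible BiHom-Lie algebra is $(V,\bullet_1,\bullet_2,\alpha_V,\beta_V)$ such that $(V,\bullet_i,\alpha_V,\beta_V)$ is a representation of $(g,[\cdot,\cdot]_i,\alpha,\beta)$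 for $i=1,2$ and $[\beta(p),q]_1\bullet_2\beta_V(v)+[\beta(p),q]_2\bullet_1\beta_V(v)=\alpha\beta(p)\bullet_1(q\bullet_2 v)-\beta(q)\bullet_2(\alpha(p)\bullet_1 v)+\alpha\beta(p)\bullet_2(q\bullet_1 v)-\beta(q)\bullet_1(\alpha(p)\bullet_2 v)$ for all $p,q\in g$, $v\in V$. *)

From HB Require Import structures.
From mathcomp Require Import all_boot all_order all_algebra.
Set Implicit Arguments. Unset Strict Implicit. Unset Printing Implicit Defensive.
Import GRing.Theory.
Local Open Scope ring_scope.

Definition bilinear_map (K : fieldType) (U W : lmodType K) (X : lmodType K)
  (f : U -> W -> X) : Prop :=
  (forall x, linear (f x)) /\ (forall y, linear (fun x => f x y)).

Definition BiHomLie (K : fieldType) (g : lmodType K) (br : g -> g -> g)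
  (al be : g -> g) : Prop :=
  [/\ linear al /\ linear be, bilinear_map br,
      al \o be =1 be \o al,
      (forall p q, br (be p) (al q) = - br (be q) (al p)) &
      (forall p q r,
         br (be (be p)) (br (be q) (al r)) + br (be (be q)) (br (be r) (al p))
         + br (be (be r)) (br (be p) (al q)) = 0)].

Definition CompatBiHomLie (K : fieldType) (g : lmodType K)
  (br1 br2 : g -> g -> g) (al be : g -> g) : Prop :=
  [/\ BiHomLie br1 al be, BiHomLie br2 al be &
      forall lam eta : K,
        BiHomLie (fun x y => lam *: br1 x y + eta *: br2 x y) al be].

Definition BiHomRep (K : fieldType) (g V : lmodType K) (br : g -> g -> g)
  (al be : g -> g) (act : g -> V -> V) (alV beV : V -> V) : Prop :=
  [/\ linear alV /\ linear beV, bilinear_map act,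
      alV \o beV =1 beV \o alV,
      (forall p v, act (al p) (alV v) = alV (act p v)) /\
      (forall p v, act (be p) (beV v) = beV (act p v)) &
      (forall p q v, act (br (be p) q) (beV v)
                     = act (al (be p)) (act q v) - act (be q) (act (al p) v))].

Definition CompatBiHomRep (K : fieldType) (g V : lmodType K)
  (br1 br2 : g -> g -> g) (al be : g -> g)
  (act1 act2 : g -> V -> V) (alV beV : V -> V) : Prop :=
  [/\ BiHomRep br1 al be act1 alV beV, BiHomRep br2 al be act2 alV beV &
      forall p q v,
        act2 (br1 (be p) q) (beV v) + act1 (br2 (be p) q) (beV v)
        = act1 (al (be p)) (act2 q v) - act2 (be q) (act1 (al p) v)
          + act2 (al (be p)) (act1 q v) - act1 (be q) (act2 (al p) v)].

Definition dsum_map (K : fieldType) (g V : lmodType K) (f : g -> g) (h : V -> V)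
  (x : g * V) : g * V := (f x.1, h x.2).

Definition semidirect_br (K : fieldType) (g V : lmodType K) (br : g -> g -> g)
  (act : g -> V -> V) (al_inv be : g -> g) (alV beV_inv : V -> V)
  (x y : g * V) : g * V :=
  (br x.1 y.1, act x.1 y.2 - act (al_inv (be y.1)) (alV (beV_inv x.2))).

From HB Require Import structures.
From mathcomp Require Import all_boot all_order all_algebra.
From Stdlib Require Import FunctionalExtensionality.
Import GRing.Theory.
Set Implicit Arguments.
Unset Strict Implicit.
Local Open Scope ring_scope.

(* The g-component of the semidirect bracket is the given bracket, so only the
   V-components of BiHom skew-symmetry and of the BiHom-Jacobi identity need
   checking.  The twist al^-1 be in the bracket is what lets the representation
   identity turn the V-component of each Jacobi term [be^2 x, [be y, al z]]
   into a difference of two iterated actions; the three cyclic terms then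
   cancel in pairs.  For compatibility, lam and eta times the two semidirect
   brackets is the semidirect bracket of lam [.,.]_1 + eta [.,.]_2 with the
   action lam .1 + eta .2, which is again a representation thanks to the
   compatibility condition on the two actions. *)

Section LinearMaps.
Variables (K : fieldType) (U W : lmodType K) (f : U -> W).
Hypothesis f_lin : linear f.

Lemma lin_add u v : f (u + v) = f u + f v.
Proof. by rewrite -[u in LHS]scale1r f_lin scale1r. Qed.

Lemma lin0 : f 0 = 0.
Proof. by apply: (@addrI _ (f 0)); rewrite -lin_add !addr0. Qed.

Lemma lin_scale a u : f (a *: u) = a *: f u.
Proof. by rewrite -[a *: u]addr0 f_lin lin0 addr0. Qed.

Lemma lin_opp u : f (- u) = - f u.
Proof. by rewrite -scaleN1r lin_scale scaleN1r. Qed.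

Lemma lin_sub u v : f (u - v) = f u - f v.
Proof. by rewrite lin_add lin_opp. Qed.

Lemma can_linear f_inv : cancel f f_inv -> cancel f_inv f -> linear f_inv.
Proof. by move=> fK f_invK a u v; apply: (can_inj fK); rewrite f_lin !f_invK. Qed.

End LinearMaps.

Lemma can_comm (T : Type) (f f_inv h : T -> T) :
  f \o h =1 h \o f -> cancel f f_inv -> cancel f_inv f ->
  forall x, f_inv (h x) = h (f_inv x).
Proof.
move=> fh fK f_invK x; apply: (can_inj fK).
by rewrite f_invK; have /= -> := fh (f_inv x); rewrite f_invK.
Qed.

Lemma cyclic_differences_sum0 (W : zmodType) (x1 x2 x3 x4 x5 x6 : W) :
  (x1 - x2 - (x3 - x4)) + (x3 - x5 - (x6 - x2)) + (x6 - x4 - (x1 - x5)) = 0.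
Proof.
rewrite !opprB !addrA !subrK (addrAC _ (- x5) x2) (addrAC _ x4 x2) subrK.
by rewrite (addrAC _ (- x5) (- x4)) addrK subrK subrr.
Qed.

Section SemidirectProduct.
Variables (K : fieldType) (g V : lmodType K) (br : g -> g -> g) (al be : g -> g)
  (act : g -> V -> V) (alV beV : V -> V)
  (al_inv : g -> g) (alV_inv beV_inv : V -> V).
Hypotheses (alK : cancel al al_inv) (al_invK : cancel al_inv al).
Hypotheses (alVK : cancel alV alV_inv) (alV_invK : cancel alV_inv alV).
Hypotheses (beVK : cancel beV beV_inv) (beV_invK : cancel beV_inv beV).
Hypothesis g_BiHomLie : BiHomLie br al be.
Hypothesis V_rep : BiHomRep br al be act alV beV.

Lemma act_twisted_bracket q r a :
  act (al_inv (be (br (be q) (al r)))) (alV (beV a)) =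
  act (be (be q)) (act (be r) (alV a)) - act (be (be r)) (act (be q) (alV a)).
Proof.
case: g_BiHomLie => [_ _ al_be _ _].
case: V_rep => [[alV_lin beV_lin] _ alV_beV [act_al act_be] act_br].
have al_be' x : al (be x) = be (al x) by exact: al_be x.
have alV_beV' v : alV (beV v) = beV (alV v) by exact: alV_beV v.
have beV_inv_alV v : beV_inv (alV v) = alV (beV_inv v).
  by apply: (can_inj beVK); rewrite beV_invK -alV_beV' beV_invK.
have act_al_inv p v : act (al_inv p) v = alV_inv (act p (alV v)).
  by apply: (can_inj alVK); rewrite alV_invK -act_al al_invK.
rewrite (can_comm al_be alK al_invK) alV_beV' act_be act_al_inv.
rewrite -[alV (alV a)]beV_invK beV_inv_alV act_br !act_al -al_be' !act_al.
by rewrite -(lin_sub alV_lin) alVK (lin_sub beV_lin) -!act_be beV_invK.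
Qed.

Lemma semidirect_BiHomLie :
  BiHomLie (g := (g * V)%type) (semidirect_br br act al_inv be alV beV_inv)
    (dsum_map al alV) (dsum_map be beV).
Proof.
case: g_BiHomLie => [[al_lin be_lin] [br_lin1 br_lin2] al_be br_skew br_jacobi].
case: V_rep => [[alV_lin beV_lin] [act_lin1 act_lin2] alV_beV _ _].
have al_be' x : al (be x) = be (al x) by exact: al_be x.
have al_inv_lin := can_linear al_lin alK al_invK.
have beV_inv_lin := can_linear beV_lin beVK beV_invK.
split.
- by split=> k [x1 x2] [y1 y2]; rewrite /dsum_map /= ?(al_lin, alV_lin, be_lin, beV_lin).
- split=> [[x1 x2] k [y1 y2] [z1 z2] | [y1 y2] k [x1 x2] [z1 z2]];
    rewrite /semidirect_br; congr pair => /=.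
  + exact: br_lin1.
  + by rewrite act_lin1 be_lin al_inv_lin act_lin2 scalerBr opprD addrACA.
  + exact: br_lin2.
  + by rewrite act_lin2 beV_inv_lin alV_lin act_lin1 scalerBr opprD addrACA.
- by move=> [x1 x2]; rewrite /dsum_map /=; congr pair; [exact: al_be | exact: alV_beV].
- move=> [p a] [q b]; rewrite /semidirect_br /dsum_map /= -!al_be' !alK !beVK.
  by congr pair => /=; [exact: br_skew | rewrite opprB].
- move=> [p a] [q b] [r c]; rewrite /semidirect_br /dsum_map /= -!al_be' !alK !beVK.
  rewrite !act_twisted_bracket !(lin_sub (act_lin1 _)); congr pair.
  + exact: br_jacobi.
  + exact: cyclic_differences_sum0.
Qed.

End SemidirectProduct.

Lemma semidirect_br_comb (K : fieldType) (g V : lmodType K)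
  (br1 br2 : g -> g -> g) (act1 act2 : g -> V -> V) (al_inv be : g -> g)
  (alV beV_inv : V -> V) (lam eta : K) :
  (fun x y => lam *: semidirect_br br1 act1 al_inv be alV beV_inv x y
            + eta *: semidirect_br br2 act2 al_inv be alV beV_inv x y)
  = semidirect_br (fun p q => lam *: br1 p q + eta *: br2 p q)
      (fun p v => lam *: act1 p v + eta *: act2 p v) al_inv be alV beV_inv.
Proof.
apply: functional_extensionality => x; apply: functional_extensionality => y.
by rewrite /semidirect_br; congr pair; rewrite /= !scalerBr opprD addrACA.
Qed.

Lemma scale_comb_comb (K : fieldType) (W : lmodType K) (lam eta : K) (x1 x2 x3 x4 : W) :
  lam *: (lam *: x1 + eta *: x2) + eta *: (lam *: x3 + eta *: x4) =
  (lam * lam) *: x1 + (lam * eta) *: (x2 + x3) + (eta * eta) *: x4.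
Proof. by rewrite !scalerDr !scalerA (mulrC eta lam) !addrA. Qed.

Lemma scale_comb_sub (K : fieldType) (W : lmodType K) (a b c : K) (x1 x2 x3 y1 y2 y3 : W) :
  a *: x1 + b *: x2 + c *: x3 - (a *: y1 + b *: y2 + c *: y3) =
  a *: (x1 - y1) + b *: (x2 - y2) + c *: (x3 - y3).
Proof. by rewrite !scalerBr (addrACA (a *: x1)) -opprD addrACA -opprD. Qed.

Lemma comb_BiHomRep (K : fieldType) (g V : lmodType K)
  (br1 br2 : g -> g -> g) (al be : g -> g)
  (act1 act2 : g -> V -> V) (alV beV : V -> V) (lam eta : K) :
  CompatBiHomRep br1 br2 al be act1 act2 alV beV ->
  BiHomRep (fun x y => lam *: br1 x y + eta *: br2 x y) al be
    (fun p v => lam *: act1 p v + eta *: act2 p v) alV beV.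
Proof.
case=> [[[alV_lin beV_lin] [act1_lin1 act1_lin2] alV_beV [act1_al act1_be] act1_br]
        [_ [act2_lin1 act2_lin2] _ [act2_al act2_be] act2_br] act12_br].
have comb_lin (k : K) (A B C D : V) :
    lam *: (k *: A + B) + eta *: (k *: C + D)
    = k *: (lam *: A + eta *: C) + (lam *: B + eta *: D).
  by rewrite !scalerDr !scalerA (mulrC lam) (mulrC eta) addrACA.
split => //.
- by split=> [x k u v | y k u v] /=;
    rewrite ?act1_lin1 ?act2_lin1 ?act1_lin2 ?act2_lin2 comb_lin.
- split=> p v /=.
  + by rewrite act1_al act2_al -!(lin_scale alV_lin) -(lin_add alV_lin).
  + by rewrite act1_be act2_be -!(lin_scale beV_lin) -(lin_add beV_lin).
- move=> p q v /=.
  rewrite !(lin_add (act1_lin2 _), lin_scale (act1_lin2 _)).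
  rewrite !(lin_add (act2_lin2 _), lin_scale (act2_lin2 _)).
  rewrite !(lin_add (act1_lin1 _), lin_scale (act1_lin1 _)).
  rewrite !(lin_add (act2_lin1 _), lin_scale (act2_lin1 _)).
  (* The lam * eta coefficient is where the compatibility of the actions enters. *)
  rewrite !scale_comb_comb act1_br act2_br (addrC (act1 (br2 _ _) _)) act12_br.
  rewrite scale_comb_sub; congr (_ + _ *: _ + _).
  by rewrite opprD addrA [RHS]addrAC [X in _ = X - _]addrAC.
Qed.

Theorem proposition3p6 (K : fieldType) (g V : lmodType K)
  (br1 br2 : g -> g -> g) (al be : g -> g)
  (act1 act2 : g -> V -> V) (alV beV : V -> V)
  (al_inv be_inv : g -> g) (alV_inv beV_inv : V -> V)
  (Hal : cancel al al_inv) (Hal' : cancel al_inv al)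
  (Hbe : cancel be be_inv) (Hbe' : cancel be_inv be)
  (HalV : cancel alV alV_inv) (HalV' : cancel alV_inv alV)
  (HbeV : cancel beV beV_inv) (HbeV' : cancel beV_inv beV) :
  CompatBiHomLie br1 br2 al be ->
  CompatBiHomRep br1 br2 al be act1 act2 alV beV ->
  CompatBiHomLie (g := (g * V)%type)
    (semidirect_br br1 act1 al_inv be alV beV_inv)
    (semidirect_br br2 act2 al_inv be alV beV_inv)
    (dsum_map al alV) (dsum_map be beV).
Proof.
move=> [g_BiHomLie1 g_BiHomLie2 g_comb] V_rep.
have [V_rep1 V_rep2 _] := V_rep.
split; [exact: semidirect_BiHomLie V_rep1 | exact: semidirect_BiHomLie V_rep2 |].
move=> lam eta; rewrite semidirect_br_comb.
exact: semidirect_BiHomLie (g_comb lam eta) (comb_BiHomRep lam eta V_rep).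
Qed.
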